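(* Let $d\in\mathbb{N}$, $d\geq 2$, and for $\theta\in \mathbb{R}$ let $R_{\theta}\colon \mathbb{R}^{d}\to\mathbb{R}^{d}$ be the linear map $R_\theta(x_1,\dots,x_d)=(x_1\cos\theta-x_2\sin\theta,\ x_1\sin\theta+x_2\cos\theta,\ x_3,\dots,x_d)$. (i) For all $\theta_{1},\theta_{2}\in\mathbb{R}$ and $y\in\mathbb{R}^{d}$, $\|R_{\theta_{2}}(y)-R_{\theta_{1}}(y)\|\leq |\theta_{2}-\theta_{1}|\,\|y\|$. (ii) Let $t_{0}>0$ and let $\psi\colon [0,\infty)\to \mathbb{R}$ be a Lipschitz mapping with $\psi(t)=0$ for all $t\geq t_{0}$. Define $\Phi\colon\mathbb{R}^{d}\to\mathbb{R}^{d}$ by $\Phi(x)=R_{\psi(\|x\|)}(x)$. Then $\Phi$ is $(\operatorname{Lip}(\psi)t_{0}+1)$-bilipschitz and $\Phi(x)=x$ for all $x\in \mathbb{R}^{d}\setminus B(0,t_{0})$.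
   Context: $\|\cdot\|$ is the Euclidean norm, $B(0,t_0)$ the open Euclidean ball. $\operatorname{Lip}(\psi)$ is the smallest Lipschitz constant of $\psi$. A mapping is $L$-bilipschitz if it is injective and both it and its inverse are $L$-Lipschitz. *)

From HB Require Import structures.
From mathcomp Require Import all_boot all_order all_algebra.
From mathcomp Require Import all_classical all_reals all_analysis.
Set Implicit Arguments. Unset Strict Implicit. Unset Printing Implicit Defensive.
Import Order.TTheory GRing.Theory Num.Theory.
Local Open Scope ring_scope.
Local Open Scope classical_set_scope.

Definition enorm {R : realType} {d : nat} (v : 'rV[R]_d) : R :=
  Num.sqrt (\sum_(i < d) v 0 i ^+ 2).

(* k-th coordinate (0-based) of v; 0 if k >= d *)
Definition coord {R : realType} {d : nat} (v : 'rV[R]_d) (k : nat) : R :=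
  \sum_(i < d | val i == k) v 0 i.

Definition Rtheta {R : realType} {d : nat} (th : R) (v : 'rV[R]_d) : 'rV[R]_d :=
  \row_(i < d)
    (if val i == 0%N then coord v 0 * cos th - coord v 1 * sin th
     else if val i == 1%N then coord v 0 * sin th + coord v 1 * cos th
     else v 0 i).

Definition lip_const_nonneg {R : realType} (psi : R -> R) (L : R) : Prop :=
  0 <= L /\ forall s t : R, 0 <= s -> 0 <= t -> `|psi s - psi t| <= L * `|s - t|.

Definition lipschitz_nonneg {R : realType} (psi : R -> R) : Prop :=
  exists L, lip_const_nonneg psi L.

Definition Lip {R : realType} (psi : R -> R) : R :=
  inf [set L | lip_const_nonneg psi L].

(* L-bilipschitz: injective, f L-Lipschitz, and f^{-1} (on the image) L-Lipschitz *)
Definition bilipschitz {R : realType} {d : nat} (f : 'rV[R]_d -> 'rV[R]_d) (L : R) : Prop :=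
  injective f /\
  (forall x y, enorm (f x - f y) <= L * enorm (x - y)) /\
  (forall x y, enorm (x - y) <= L * enorm (f x - f y)).

(* The rotations [R_th] are linear isometries, and |R_a y - R_b y| is a chord of a circle
   of radius at most |y| subtending the angle |a - b|, whence part (i) via
   2 - 2 cos t <= t^2.  For [Phi x = R_(psi |x|) x] and |x| <= |y|,
     Phi x - Phi y = (R_(psi |x|) x - R_(psi |y|) x) + R_(psi |y|) (x - y);
   the second term has norm |x - y|, the first is at most |psi |x| - psi |y|| |x|, which
   vanishes unless |x| < t0 and is then at most Lip(psi) t0 |x - y|.  As Phi preserves
   norms, its inverse is the same construction for [-psi], so the same bound holds. *)

From Pilot Require Import Defs.
From HB Require Import structures.
From mathcomp Require Import all_boot all_order all_algebra.
From mathcomp Require Import all_classical all_reals all_analysis.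
From mathcomp Require Import lra ring.
Import Order.TTheory GRing.Theory Num.Theory numFieldNormedType.Exports.
Local Open Scope ring_scope.

Set Implicit Arguments.
Unset Strict Implicit.
Unset Printing Implicit Defensive.

Section Trigonometry.
Variable R : realType.

Lemma ler_norm_sin (x : R) : `|sin x| <= `|x|.
Proof.
wlog x_ge0 : x / 0 <= x.
  move=> H; have [/H//|x_lt0] := leP 0 x.
  by rewrite -normrN -sinN -(normrN x) H // oppr_ge0 ltW.
have [|c _] := @MVT_segment R sin cos 0 x x_ge0 (fun y _ => is_derive_sin y).
  by apply: continuous_subspaceT => y; exact: continuous_sin.
rewrite sin0 !subr0; move=> ->.
by rewrite normrM (ger0_norm x_ge0) ler_piMl // cos_max.
Qed.

(* [2 - 2 cos x = 4 sin^2 (x/2)] *)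
Lemma two_sub_twice_cos_le_sqr (x : R) : 2 - 2 * cos x <= x ^+ 2.
Proof.
set t := x / 2; have -> : x = t *+ 2 by rewrite /t -mulr_natr divfK ?pnatr_eq0.
have : sin t ^+ 2 <= t ^+ 2.
  by have := ler_norm_sin t; rewrite -ler_sqr ?nnegrE // !real_normK ?num_real.
rewrite cos_mulr2n cos2sin2; nra.
Qed.

End Trigonometry.

Lemma cauchy_schwarz_sum (R : realDomainType) n (a b : 'I_n -> R) :
  (\sum_i a i * b i) ^+ 2 <= (\sum_i a i ^+ 2) * (\sum_i b i ^+ 2).
Proof.
have lagrange : \sum_i \sum_j (a i * b j - a j * b i) ^+ 2 =
    \sum_i \sum_j a i ^+ 2 * b j ^+ 2 + \sum_i \sum_j a j ^+ 2 * b i ^+ 2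
    - (\sum_i \sum_j a i * b i * (a j * b j)) *+ 2.
  rewrite -sumrMnl -big_split -sumrB /=; apply: eq_bigr => i _.
  rewrite -sumrMnl -big_split -sumrB /=; apply: eq_bigr => j _; ring.
rewrite [in X in _ + X - _]exchange_big /= -!big_distrlr /= -expr2 in lagrange.
have : 0 <= \sum_i \sum_j (a i * b j - a j * b i) ^+ 2.
  by apply: sumr_ge0 => i _; apply: sumr_ge0 => j _; apply: sqr_ge0.
rewrite lagrange; lra.
Qed.

Lemma sqrtr_le_of_le_sqr (R : rcfType) (x y : R) : 0 <= y -> x <= y ^+ 2 -> Num.sqrt x <= y.
Proof. by move=> y_ge0 /ler_wsqrtr; rewrite sqrtr_sqr ger0_norm. Qed.

Lemma row_subE (R : zmodType) d (u v : 'rV[R]_d) i : (u - v) 0 i = u 0 i - v 0 i.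
Proof. by rewrite !mxE. Qed.

Section EuclideanNorm.
Variables (R : realType) (d : nat).
Implicit Types u v x y : 'rV[R]_d.

Definition sqnorm v : R := \sum_(i < d) v 0 i ^+ 2.

Lemma enormE v : enorm v = Num.sqrt (sqnorm v).
Proof. by []. Qed.

Lemma sqnorm_ge0 v : 0 <= sqnorm v.
Proof. by apply: sumr_ge0 => i _; apply: sqr_ge0. Qed.

Lemma enorm_ge0 v : 0 <= enorm v.
Proof. exact: sqrtr_ge0. Qed.

Lemma enormBC x y : enorm (x - y) = enorm (y - x).
Proof. by rewrite -opprB enormE /sqnorm; under eq_bigr do rewrite mxE sqrrN. Qed.

Lemma ler_enormD u v : enorm (u + v) <= enorm u + enorm v.
Proof.
rewrite !enormE; apply: sqrtr_le_of_le_sqr; first by rewrite addr_ge0 ?sqrtr_ge0.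
have -> : sqnorm (u + v) = sqnorm u + sqnorm v + (\sum_i u 0 i * v 0 i) *+ 2.
  rewrite /sqnorm -sumrMnl -!big_split /=; apply: eq_bigr => i _; rewrite !mxE; ring.
have : \sum_i u 0 i * v 0 i <= Num.sqrt (sqnorm u) * Num.sqrt (sqnorm v).
  rewrite -sqrtrM ?sqnorm_ge0 //; apply: le_trans (ler_norm _) _.
  by rewrite -sqrtr_sqr ler_wsqrtr // cauchy_schwarz_sum.
rewrite sqrrD !sqr_sqrtr ?sqnorm_ge0 //; lra.
Qed.

Lemma ler_dist_enorm x y : `|enorm x - enorm y| <= enorm (x - y).
Proof.
have := ler_enormD (x - y) y; have := ler_enormD (y - x) x.
by rewrite !subrK (enormBC y) ler_norml; lra.
Qed.

End EuclideanNorm.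

Section PlaneRotation.
Variables (R : realType) (n : nat).
Implicit Types (th a b : R) (u v x y : 'rV[R]_n.+2).

Local Notation i1 := (lift ord0 (@ord0 n)).
Local Notation i2 k := (lift ord0 (lift ord0 k)).

Lemma row2P u v :
  u 0 ord0 = v 0 ord0 -> u 0 i1 = v 0 i1 -> (forall k, u 0 (i2 k) = v 0 (i2 k)) -> u = v.
Proof.
move=> e0 e1 e2; apply/rowP => i.
case: (unliftP ord0 i) => [j ->|->] //; case: (unliftP ord0 j) => [k ->|->] //.
Qed.

Lemma sqnorm_row2 v :
  sqnorm v = v 0 ord0 ^+ 2 + v 0 i1 ^+ 2 + \sum_(k < n) v 0 (i2 k) ^+ 2.
Proof. by rewrite /sqnorm !big_ord_recl addrA. Qed.

Lemma coord_ord0 v : Defs.coord v 0 = v 0 ord0.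
Proof. by rewrite /Defs.coord (big_pred1 ord0) // => i /=; rewrite -val_eqE. Qed.

Lemma coord_ord1 v : Defs.coord v 1 = v 0 i1.
Proof. by rewrite /Defs.coord (big_pred1 i1) // => i /=; rewrite -val_eqE. Qed.

Lemma Rtheta_ord0 th v : Rtheta th v 0 ord0 = v 0 ord0 * cos th - v 0 i1 * sin th.
Proof. by rewrite mxE /= coord_ord0 coord_ord1. Qed.

Lemma Rtheta_ord1 th v : Rtheta th v 0 i1 = v 0 ord0 * sin th + v 0 i1 * cos th.
Proof. by rewrite mxE /= coord_ord0 coord_ord1. Qed.

Lemma Rtheta_lift2 th v k : Rtheta th v 0 (i2 k) = v 0 (i2 k).
Proof. by rewrite mxE. Qed.

Definition RthetaE := (Rtheta_ord0, Rtheta_ord1, Rtheta_lift2).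

Lemma RthetaB th x y : Rtheta th (x - y) = Rtheta th x - Rtheta th y.
Proof. by apply: row2P => *; rewrite !(RthetaE, row_subE); ring. Qed.

Lemma Rtheta0 v : Rtheta 0 v = v.
Proof. by apply: row2P => *; rewrite !RthetaE ?cos0 ?sin0 //; ring. Qed.

Lemma RthetaK th : cancel (@Rtheta R n.+2 th) (Rtheta (- th)).
Proof.
move=> v; have trig := cos2Dsin2 th.
by apply: row2P => *; rewrite !RthetaE // cosN sinN -[RHS]mulr1 -trig; ring.
Qed.

Lemma enorm_Rtheta th v : enorm (Rtheta th v) = enorm v.
Proof.
rewrite !enormE !sqnorm_row2; under eq_bigr do rewrite Rtheta_lift2.
congr (Num.sqrt (_ + _)); have := cos2Dsin2 th; rewrite !RthetaE; nra.
Qed.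

Lemma sqnorm_Rtheta_sub a b y :
  sqnorm (Rtheta a y - Rtheta b y) = (2 - 2 * cos (a - b)) * (y 0 ord0 ^+ 2 + y 0 i1 ^+ 2).
Proof.
rewrite sqnorm_row2 big1 => [|k _]; last by rewrite row_subE !RthetaE subrr expr0n.
have := cos2Dsin2 a; have := cos2Dsin2 b.
rewrite addr0 !row_subE !RthetaE cosB; nra.
Qed.

Lemma enorm_Rtheta_sub_le a b y : enorm (Rtheta a y - Rtheta b y) <= `|a - b| * enorm y.
Proof.
rewrite !enormE; apply: sqrtr_le_of_le_sqr; first by rewrite mulr_ge0 ?sqrtr_ge0.
rewrite exprMn real_normK ?num_real // sqr_sqrtr ?sqnorm_ge0 // sqnorm_Rtheta_sub.
apply: ler_pM.
- by have := cos_le1 (a - b); lra.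
- by rewrite addr_ge0 ?sqr_ge0.
- exact: two_sub_twice_cos_le_sqr.
- by rewrite sqnorm_row2 lerDl sumr_ge0 // => k _; apply: sqr_ge0.
Qed.

End PlaneRotation.

Lemma lip_const_Lip (R : realType) (psi : R -> R) :
  lipschitz_nonneg psi -> lip_const_nonneg psi (Lip psi).
Proof.
move=> [L0 psiL0]; set S := [set L | lip_const_nonneg psi L]%classic.
have S_neq0 : nonempty S by exists L0.
have S_lb0 : lbound S 0 by move=> L [].
split=> [|s t s_ge0 t_ge0]; first exact: lb_le_inf S_neq0 S_lb0.
have [->|s_neq_t] := eqVneq s t; first by rewrite !subrr normr0 mulr0.
have st_gt0 : 0 < `|s - t| by rewrite normr_gt0 subr_eq0.
rewrite -ler_pdivrMr //; apply: lb_le_inf S_neq0 _ => L [_ psiL].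
by rewrite ler_pdivrMr // psiL.
Qed.

Lemma lip_const_nonnegN (R : realType) (psi : R -> R) (L : R) :
  lip_const_nonneg psi L -> lip_const_nonneg (fun s => - psi s) L.
Proof. by move=> [L_ge0 psiL]; split=> // s t s_ge0 t_ge0; rewrite -opprD normrN psiL. Qed.

Section Twist.
Variables (R : realType) (n : nat).
Implicit Types (psi : R -> R) (x y : 'rV[R]_n.+2).

Definition twist psi x := Rtheta (psi (enorm x)) x.

Lemma twistK psi : cancel (twist psi) (twist (fun s => - psi s)).
Proof. by move=> x; rewrite /twist enorm_Rtheta RthetaK. Qed.

Lemma twist_id psi t0 :
  (forall t, t0 <= t -> psi t = 0) -> forall x, t0 <= enorm x -> twist psi x = x.
Proof. by move=> psi_out x /psi_out; rewrite /twist => ->; rewrite Rtheta0. Qed.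

Lemma twist_lipschitz psi L t0 :
  lip_const_nonneg psi L -> 0 <= t0 -> (forall t, t0 <= t -> psi t = 0) ->
  forall x y, enorm (twist psi x - twist psi y) <= (L * t0 + 1) * enorm (x - y).
Proof.
move=> [L_ge0 psiL] t0_ge0 psi_out x y.
wlog le_xy : x y / enorm x <= enorm y.
  move=> H; have [/H//|/ltW le_yx] := leP (enorm x) (enorm y).
  by rewrite enormBC (enormBC x); exact: H.
rewrite /twist; set a := psi (enorm x); set b := psi (enorm y).
have -> : Rtheta a x - Rtheta b y = (Rtheta a x - Rtheta b x) + Rtheta b (x - y).
  by rewrite RthetaB addrA subrK.
apply: le_trans (ler_enormD _ _) _.
rewrite enorm_Rtheta mulrDl mul1r lerD2r.
apply: le_trans (enorm_Rtheta_sub_le _ _ _) _.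
have [le_xt0|lt_t0x] := lerP (enorm x) t0.
  rewrite mulrAC; apply: ler_pM; rewrite ?enorm_ge0 //.
  apply: le_trans (psiL _ _ (enorm_ge0 _) (enorm_ge0 _)) _.
  by rewrite ler_wpM2l // ler_dist_enorm.
have a0 : a = 0 by apply: psi_out; exact: ltW.
have b0 : b = 0 by apply: psi_out; exact: le_trans (ltW lt_t0x) le_xy.
by rewrite a0 b0 subrr normr0 mul0r !mulr_ge0 ?enorm_ge0.
Qed.

End Twist.

Theorem lemma3p2 (R : realType) (d : nat) (hd : (2 <= d)%N) :
  (forall (th1 th2 : R) (y : 'rV[R]_d),
      enorm (Rtheta th2 y - Rtheta th1 y) <= `|th2 - th1| * enorm y) /\
  (forall (t0 : R) (psi : R -> R),
      0 < t0 ->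
      lipschitz_nonneg psi ->
      (forall t, t0 <= t -> psi t = 0) ->
      bilipschitz (fun x : 'rV[R]_d => Rtheta (psi (enorm x)) x) (Lip psi * t0 + 1) /\
      (forall x : 'rV[R]_d, t0 <= enorm x -> Rtheta (psi (enorm x)) x = x)).
Proof.
case: d hd => [|[|n]] // _.
split=> [th1 th2 y|t0 psi t0_gt0 /lip_const_Lip psiL psi_out].
  exact: enorm_Rtheta_sub_le.
have t0_ge0 := ltW t0_gt0.
have psiN_out t : t0 <= t -> - psi t = 0 by move=> /psi_out ->; rewrite oppr0.
split; [split; [|split]|].
- exact: can_inj (twistK psi).
- exact: twist_lipschitz psiL t0_ge0 psi_out.
- move=> x y.
  have := twist_lipschitz (lip_const_nonnegN psiL) t0_ge0 psiN_out (twist psi x) (twist psi y).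
  by rewrite !twistK.
- exact: twist_id psi_out.
Qed.
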